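(* Let $A \in \mathbb{R}^{m \times r}$, $B=(b_{ji}) \in \mathbb{R}^{r \times n}$ with rows $b_1,\dots,b_r$, $S\subseteq\mathbb{R}^n$, and for $\kappa\in\mathbb{R}^r_+$ let $f_\kappa(x) = A_\kappa x^B$ on $\mathbb{R}^n_+$. Assume $f_\kappa$ is injective with respect to $S$ for all $\kappa \in \mathbb{R}^r_+$. Let $\Omega_B = \{ x \in \overline{\mathbb{R}}^n_+ \mid x_i \neq 0 \text{ whenever } b_{ji} < 0 \text{ for some } j \in [r] \}$ and let $\bar f_\kappa\colon\Omega_B\to\mathbb{R}^m$, $\bar f_\kappa(x)=A_\kappa x^B$, be the extension of $f_\kappa$. Let $x,y \in \Omega_B$ with $x \neq y$ and $x-y\in S$, such that for every $j \in [r]$, $x^{b_j}=y^{b_j}=0$ implies $x_i = y_i = 0$ for all $i \in [n]$ with $b_{ji} \neq 0$. Then $\bar f_\kappa(x) \neq \bar f_\kappa(y)$ for all $\kappa \in \mathbb{R}^r_+$.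
   Context: $\mathbb{R}_+$ denotes the strictly positive reals and $\overline{\mathbb{R}}_+$ the nonnegative reals. $x^{b_j}=\prod_i x_i^{b_{ji}}$ with the convention $0^0=1$ (well defined on $\Omega_B$), $x^B=(x^{b_1},\dots,x^{b_r})$, $A_\kappa=A\,\mathrm{diag}(\kappa)$, $[r]=\{1,\dots,r\}$. A function $g$ on $\mathbb{R}^n_+$ is injective with respect to $S$ if $x,y\in\mathbb{R}^n_+$, $x\ne y$, $x-y\in S$ imply $g(x)\neq g(y)$. *)

From Stdlib Require Import Reals.
From mathcomp Require Import all_boot.
Open Scope R_scope.
Set Implicit Arguments.

(* Real power with the convention 0^0 = 1 and 0^e = 0 for e <> 0
   (on Omega_B, 0 is only raised to exponents e >= 0). *)
Definition rpow (a e : R) : R :=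
  if Req_EM_T e 0 then 1 else if Req_EM_T a 0 then 0 else Rpower a e.

Definition sumI (n : nat) (f : 'I_n -> R) : R := foldr Rplus 0 (map f (enum 'I_n)).
Definition prodI (n : nat) (f : 'I_n -> R) : R := foldr Rmult 1 (map f (enum 'I_n)).

Definition monom (r n : nat) (B : 'I_r -> 'I_n -> R) (x : 'I_n -> R) (j : 'I_r) : R :=
  @prodI n (fun i => rpow (x i) (B j i)).

(* A_kappa x^B = A diag(kappa) x^B *)
Definition fk (m r n : nat) (A : 'I_m -> 'I_r -> R) (B : 'I_r -> 'I_n -> R)
  (kappa : 'I_r -> R) (x : 'I_n -> R) : 'I_m -> R :=
  fun k => @sumI r (fun j => A k j * kappa j * monom B x j).

Definition positive_vec (n : nat) (x : 'I_n -> R) : Prop := forall i, 0 < x i.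

Definition injective_wrt (m n : nat) (g : ('I_n -> R) -> ('I_m -> R))
  (S : ('I_n -> R) -> Prop) : Prop :=
  forall x y, positive_vec x -> positive_vec y -> x <> y ->
    S (fun i => x i - y i) -> g x <> g y.

Definition OmegaB (r n : nat) (B : 'I_r -> 'I_n -> R) (x : 'I_n -> R) : Prop :=
  (forall i, 0 <= x i) /\ (forall i, (exists j, B j i < 0) -> x i <> 0).

From Stdlib Require Import Reals Lra FunctionalExtensionality.
From mathcomp Require Import all_boot.
Open Scope R_scope.
Set Implicit Arguments.

(* Assume f_kappa(x) = f_kappa(y).  Let c be the 0/1 vector
   marking the coordinates where x or y vanishes, and move both points into
   the open orthant along c: x_e = x + e c, y_e = y + e c with e > 0.  Then
   x_e - y_e = x - y, so x_e and y_e are distinct and their difference lies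
   in S.  For every monomial j, the gap D_j = x^{b_j} - y^{b_j} and the
   perturbed gap D_j(e) = x_e^{b_j} - y_e^{b_j} have the "same sign" for all
   small e: if D_j = 0 the hypothesis on vanishing monomials forces
   D_j(e) = 0, and if D_j <> 0 this follows from the right continuity of
   e |-> x_e^{b_j} at 0.  Rescaling kappa_j by D_j / D_j(e) gives a positive
   kappa' with kappa'_j D_j(e) = kappa_j D_j, hence
   f_kappa'(x_e) = f_kappa'(y_e), contradicting injectivity on R^n_+. *)

Lemma rpow_exp0 (a : R) : rpow a 0 = 1.
Proof. unfold rpow; destruct (Req_EM_T 0 0); [reflexivity | contradiction]. Qed.

Lemma rpow_pos (a b : R) : 0 < a -> b <> 0 -> rpow a b = Rpower a b.
Proof.
intros ha hb; unfold rpow.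
destruct (Req_EM_T b 0); [contradiction |].
destruct (Req_EM_T a 0); [lra | reflexivity].
Qed.

Lemma rpow_base0 (b : R) : b <> 0 -> rpow 0 b = 0.
Proof.
intros hb; unfold rpow.
destruct (Req_EM_T b 0); [contradiction |].
destruct (Req_EM_T 0 0); [reflexivity | contradiction].
Qed.

Definition pos_reals : R -> Prop := fun e => 0 < e.

Lemma rpow_right_cont (z b : R) : 0 <= z -> (b < 0 -> z <> 0) ->
  limit1_in (fun e => rpow (z + e) b) pos_reals (rpow z b) 0.
Proof.
intros hz hbz eps heps.
destruct (Req_EM_T b 0) as [-> | hb].
{ exists 1; split; [lra |]; intros e _; simpl; unfold R_dist.
  rewrite !rpow_exp0 Rminus_diag Rabs_R0; lra. }
destruct (Req_EM_T z 0) as [-> | hz0].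
- (* at the boundary the exponent is positive and e^b -> 0 *)
  assert (hbp : 0 < b).
  { destruct (Rlt_or_le b 0) as [h | h]; [exfalso; exact (hbz h (erefl 0)) | lra]. }
  exists (Rpower eps (/ b)); split; [unfold Rpower; apply exp_pos |].
  intros e [he hd]; simpl in *; unfold R_dist, pos_reals in *.
  rewrite Rminus_0_r Rabs_right in hd; [| lra].
  rewrite (rpow_base0 hb) Rplus_0_l Rminus_0_r (rpow_pos he hb).
  assert (hp : 0 < Rpower e b) by (unfold Rpower; apply exp_pos).
  rewrite Rabs_right; [| lra].
  replace eps with (Rpower (Rpower eps (/ b)) b).
  + apply Rlt_Rpower_l; lra.
  + rewrite Rpower_mult Rinv_l; [apply Rpower_1; lra | exact hb].
- (* in the interior, Rpower _ b is differentiable, hence continuous *)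
  assert (hzp : 0 < z) by lra.
  destruct (derivable_continuous_pt (fun a => Rpower a b) z
              (exist _ _ (derivable_pt_lim_power z b hzp)) eps heps)
    as [a [ha Hcont]].
  exists (Rmin a z); split; [apply Rmin_pos; lra |].
  intros e [he hd]; simpl in *; unfold R_dist, pos_reals in *.
  rewrite Rminus_0_r Rabs_right in hd; [| lra].
  pose proof (Rmin_l a z); pose proof (Rmin_r a z).
  rewrite (rpow_pos (a := z + e)) ?(rpow_pos hzp hb); [| lra | exact hb].
  apply (Hcont (z + e)); split; [split; [exact I | lra] |].
  simpl; unfold R_dist; replace (z + e - z) with e by ring.
  rewrite Rabs_right; lra.
Qed.

Lemma prod_right_cont (T : Type) (s : seq T) (F : R -> T -> R) (L : T -> R) :
  (forall t, limit1_in (fun e => F e t) pos_reals (L t) 0) ->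
  limit1_in (fun e => foldr Rmult 1 (map (F e) s)) pos_reals
            (foldr Rmult 1 (map L s)) 0.
Proof.
intros HF; induction s as [| t s IH]; simpl.
- exact (limit_free (fun _ => 1) pos_reals 0 0).
- apply limit_mul; [apply HF | exact IH].
Qed.

Lemma monom_right_cont (r n : nat) (B : 'I_r -> 'I_n -> R) (x c : 'I_n -> R)
    (j : 'I_r) :
  OmegaB B x -> (forall i, c i = 0 \/ c i = 1) ->
  limit1_in (fun e => monom B (fun i => x i + e * c i) j) pos_reals
            (monom B x j) 0.
Proof.
intros [hx0 hxneg] hc; unfold monom, prodI.
apply (@prod_right_cont _ _ (fun e i => rpow (x i + e * c i) (B j i))).
intros i; destruct (hc i) as [-> | ->].
- apply (limit1_ext (fun _ => rpow (x i) (B j i))).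
  + intros e _; simpl; rewrite Rmult_0_r Rplus_0_r; reflexivity.
  + exact (limit_free (fun _ => rpow (x i) (B j i)) pos_reals 0 0).
- apply (limit1_ext (fun e => rpow (x i + e) (B j i))).
  + intros e _; simpl; rewrite Rmult_1_r; reflexivity.
  + apply rpow_right_cont; [apply hx0 | intros hb; apply hxneg; exists j; exact hb].
Qed.

Definition small_pos (P : R -> Prop) : Prop :=
  exists d, 0 < d /\ forall e, 0 < e < d -> P e.

Lemma small_pos_forall (T : finType) (P : T -> R -> Prop) :
  (forall t, small_pos (P t)) -> small_pos (fun e => forall t, P t e).
Proof.
intros HP.
assert (Hseq : forall s : seq T,
          small_pos (fun e => forall t, t \in s -> P t e)).
{ induction s as [| a s [d1 [hd1 H1]]].
  - exists 1; split; [lra | intros e _ t ht; discriminate ht].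
  - destruct (HP a) as [d2 [hd2 H2]].
    exists (Rmin d1 d2); split; [apply Rmin_pos; lra |].
    intros e he t ht; pose proof (Rmin_l d1 d2); pose proof (Rmin_r d1 d2).
    rewrite in_cons in ht; destruct (t == a) eqn:Eta.
    + move/eqP: Eta => ->; apply H2; lra.
    + apply H1; [lra | exact ht]. }
destruct (Hseq (enum T)) as [d [hd Hd]].
exists d; split; [exact hd | intros e he t; apply Hd; [exact he | by rewrite mem_enum]].
Qed.

Lemma small_pos_sign (f : R -> R) (L : R) :
  limit1_in f pos_reals L 0 -> L <> 0 -> small_pos (fun e => 0 < L * f e).
Proof.
intros Hf hL.
assert (hhalf : 0 < Rabs L / 2) by (pose proof (Rabs_pos_lt L hL); lra).
destruct (Hf _ hhalf) as [d [hd Hd]].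
exists d; split; [exact hd | intros e he].
assert (Hclose : Rabs (f e - L) < Rabs L / 2).
{ apply (Hd e); simpl; unfold R_dist, pos_reals.
  rewrite Rminus_0_r Rabs_right; lra. }
apply Rabs_def2 in Hclose.
destruct (Rle_or_lt 0 L) as [h | h].
- rewrite Rabs_right in Hclose; nra.
- rewrite Rabs_left in Hclose; nra.
Qed.

Lemma prodI_zero (n : nat) (f : 'I_n -> R) (i : 'I_n) : f i = 0 -> prodI f = 0.
Proof.
intros hf; unfold prodI.
have : i \in enum 'I_n by rewrite mem_enum.
elim: (enum 'I_n) => [| a s IH] //=; rewrite in_cons => /orP [/eqP <- | hs].
- rewrite hf; ring.
- rewrite (IH hs); ring.
Qed.

Lemma sumI_sub (n : nat) (f g : 'I_n -> R) :
  sumI f - sumI g = sumI (fun j => f j - g j).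
Proof. unfold sumI; elim: (enum 'I_n) => [| a s IH] /=; [ring | rewrite -IH; ring]. Qed.

Lemma sumI_ext (n : nat) (f g : 'I_n -> R) :
  (forall j, f j = g j) -> sumI f = sumI g.
Proof. intros h; unfold sumI; rewrite (eq_map h); reflexivity. Qed.

Lemma monom_congr (r n : nat) (B : 'I_r -> 'I_n -> R) (u v : 'I_n -> R)
    (j : 'I_r) :
  (forall i, B j i <> 0 -> u i = v i) -> monom B u j = monom B v j.
Proof.
intros huv; unfold monom, prodI; f_equal; apply eq_map; intros i.
destruct (Req_EM_T (B j i) 0) as [-> | hb]; [rewrite !rpow_exp0 | rewrite huv]; done.
Qed.

Lemma monom_support_nz (r n : nat) (B : 'I_r -> 'I_n -> R) (x : 'I_n -> R)
    (j : 'I_r) (i : 'I_n) :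
  monom B x j <> 0 -> B j i <> 0 -> x i <> 0.
Proof.
intros hm hb hx; apply hm; unfold monom.
apply (@prodI_zero _ _ i); rewrite hx; exact (rpow_base0 hb).
Qed.

Lemma fk_sub (m r n : nat) (A : 'I_m -> 'I_r -> R) (B : 'I_r -> 'I_n -> R)
    (kappa : 'I_r -> R) (x y : 'I_n -> R) (k : 'I_m) :
  fk A B kappa x k - fk A B kappa y k =
  sumI (fun j => A k j * (kappa j * (monom B x j - monom B y j))).
Proof. unfold fk; rewrite sumI_sub; apply sumI_ext; intros j; ring. Qed.

Lemma fk_eq_of_gaps (m r n : nat) (A : 'I_m -> 'I_r -> R) (B : 'I_r -> 'I_n -> R)
    (kappa kappa' : 'I_r -> R) (x y x' y' : 'I_n -> R) :
  (forall j, kappa' j * (monom B x' j - monom B y' j) =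
             kappa j * (monom B x j - monom B y j)) ->
  fk A B kappa x = fk A B kappa y -> fk A B kappa' x' = fk A B kappa' y'.
Proof.
intros hgap heq; apply functional_extensionality; intros k.
apply Rminus_diag_uniq; rewrite fk_sub.
rewrite (@sumI_ext _ _ (fun j => A k j * (kappa j * (monom B x j - monom B y j)))).
- rewrite -fk_sub heq; ring.
- intros j; rewrite hgap; reflexivity.
Qed.

(** * The perturbation into the open orthant *)

Definition zero_pattern (n : nat) (x y : 'I_n -> R) (i : 'I_n) : R :=
  if Req_EM_T (x i) 0 then 1 else if Req_EM_T (y i) 0 then 1 else 0.

Definition shift (n : nat) (e : R) (c x : 'I_n -> R) : 'I_n -> R :=
  fun i => x i + e * c i.

Lemma zero_pattern01 (n : nat) (x y : 'I_n -> R) (i : 'I_n) :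
  zero_pattern x y i = 0 \/ zero_pattern x y i = 1.
Proof.
unfold zero_pattern.
destruct (Req_EM_T (x i) 0); [| destruct (Req_EM_T (y i) 0)]; auto.
Qed.

Lemma zero_pattern_nz (n : nat) (x y : 'I_n -> R) (i : 'I_n) :
  x i <> 0 -> y i <> 0 -> zero_pattern x y i = 0.
Proof.
intros hx hy; unfold zero_pattern.
destruct (Req_EM_T (x i) 0); [contradiction |].
destruct (Req_EM_T (y i) 0); [contradiction | reflexivity].
Qed.

Lemma zero_pattern_l (n : nat) (x y : 'I_n -> R) (i : 'I_n) :
  x i = 0 -> zero_pattern x y i = 1.
Proof. intros hx; unfold zero_pattern; destruct (Req_EM_T (x i) 0); [done | contradiction]. Qed.

Lemma zero_pattern_r (n : nat) (x y : 'I_n -> R) (i : 'I_n) :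
  y i = 0 -> zero_pattern x y i = 1.
Proof.
intros hy; unfold zero_pattern.
destruct (Req_EM_T (x i) 0); [done | destruct (Req_EM_T (y i) 0); [done | contradiction]].
Qed.

Lemma shift_positive (n : nat) (e : R) (c x : 'I_n -> R) :
  0 < e -> (forall i, 0 <= x i) -> (forall i, 0 <= c i) ->
  (forall i, x i = 0 -> 0 < c i) -> positive_vec (shift e c x).
Proof.
intros he hx hc hxc i; unfold shift.
pose proof (hx i); pose proof (hc i).
destruct (Req_EM_T (x i) 0) as [h0 | h0].
- pose proof (hxc i h0); nra.
- nra.
Qed.

Lemma shift_sub (n : nat) (e : R) (c x y : 'I_n -> R) :
  (fun i => shift e c x i - shift e c y i) = (fun i => x i - y i).
Proof. apply functional_extensionality; intros i; unfold shift; ring. Qed.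

Definition same_sign (p q : R) : Prop := (p = 0 /\ q = 0) \/ 0 < p * q.

Lemma monom_gap_same_sign (r n : nat) (B : 'I_r -> 'I_n -> R) (x y : 'I_n -> R)
    (j : 'I_r) :
  OmegaB B x -> OmegaB B y ->
  (monom B x j = 0 -> monom B y j = 0 ->
     forall i, B j i <> 0 -> x i = 0 /\ y i = 0) ->
  small_pos (fun e =>
    same_sign (monom B x j - monom B y j)
      (monom B (shift e (zero_pattern x y) x) j -
       monom B (shift e (zero_pattern x y) y) j)).
Proof.
intros Hx Hy Hzero; set c := zero_pattern x y.
destruct (Req_EM_T (monom B x j) (monom B y j)) as [heq | hne].
- exists 1; split; [lra | intros e _; left; split; [lra |]].
  apply Rminus_diag_eq.
  destruct (Req_EM_T (monom B x j) 0) as [hx0 | hx0].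
  + (* both monomials vanish: x and y agree (are 0) on the support *)
    assert (hy0 : monom B y j = 0) by (rewrite -heq; exact hx0).
    apply monom_congr; intros i hb.
    unfold shift; destruct (Hzero hx0 hy0 i hb) as [-> ->]; reflexivity.
  + (* neither vanishes: the support avoids the perturbed coordinates *)
    assert (hy0 : monom B y j <> 0) by (rewrite -heq; exact hx0).
    assert (hfix : forall z, monom B (shift e c z) j = monom B z j).
    { intros z; apply monom_congr; intros i hb; unfold shift, c.
      rewrite zero_pattern_nz; [ring | |];
        eapply monom_support_nz; eassumption. }
    rewrite !hfix; exact heq.
- assert (Hlim : limit1_in
            (fun e => monom B (shift e c x) j - monom B (shift e c y) j)
            pos_reals (monom B x j - monom B y j) 0).
  { apply limit_minus; apply monom_right_cont; auto; intros i; apply zero_pattern01. }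
  destruct (small_pos_sign Hlim) as [d [hd Hd]]; [lra |].
  exists d; split; [exact hd | intros e he; right; exact (Hd e he)].
Qed.

(** * Rescaling the rate constants *)

Definition rescale (k p q : R) : R := if Req_EM_T q 0 then k else k * p / q.

Lemma rescale_pos (k p q : R) : 0 < k -> same_sign p q -> 0 < rescale k p q.
Proof.
intros hk hpq; unfold rescale; destruct (Req_EM_T q 0) as [hq0 | hq0]; [exact hk |].
destruct hpq as [[_ hq] | hpq]; [contradiction |].
replace (k * p / q) with (k * (p * q) * (/ q * / q)) by (field; exact hq0).
apply Rmult_lt_0_compat; [nra | exact (Rsqr_pos_lt _ (Rinv_neq_0_compat _ hq0))].
Qed.

Lemma rescale_spec (k p q : R) : same_sign p q -> rescale k p q * q = k * p.
Proof.
intros hpq; unfold rescale; destruct (Req_EM_T q 0) as [hq0 | hq0].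
- subst q; destruct hpq as [[-> _] | hpq]; [ring | rewrite Rmult_0_r in hpq; lra].
- simpl; field; exact hq0.
Qed.

Theorem mainTheorem10 (m r n : nat) (A : 'I_m -> 'I_r -> R) (B : 'I_r -> 'I_n -> R)
  (S : ('I_n -> R) -> Prop)
  (Hinj : forall kappa : 'I_r -> R, positive_vec kappa -> injective_wrt (fk A B kappa) S)
  (x y : 'I_n -> R) (Hx : OmegaB B x) (Hy : OmegaB B y) (Hxy : x <> y)
  (HS : S (fun i => x i - y i))
  (Hzero : forall j : 'I_r, monom B x j = 0 -> monom B y j = 0 ->
     forall i : 'I_n, B j i <> 0 -> x i = 0 /\ y i = 0) :
  forall kappa : 'I_r -> R, positive_vec kappa -> fk A B kappa x <> fk A B kappa y.
Proof.
intros kappa hk Heq.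
set c := zero_pattern x y.
destruct (@small_pos_forall 'I_r _ (fun j => monom_gap_same_sign j Hx Hy (Hzero j)))
  as [d [hd Hsign]].
set e := d / 2; assert (he : 0 < e < d) by (unfold e; lra).
set kappa' := fun j => rescale (kappa j) (monom B x j - monom B y j)
                         (monom B (shift e c x) j - monom B (shift e c y) j).
assert (hc0 : forall i, 0 <= c i).
{ intros i; unfold c; destruct (zero_pattern01 x y i) as [-> | ->]; lra. }
apply (Hinj kappa' (fun j => rescale_pos (hk j) (Hsign e he j))
            (shift e c x) (shift e c y)).
- apply shift_positive; [lra | apply Hx | exact hc0 |].
  intros i hxi; unfold c; rewrite zero_pattern_l; [lra | exact hxi].
- apply shift_positive; [lra | apply Hy | exact hc0 |].
  intros i hyi; unfold c; rewrite zero_pattern_r; [lra | exact hyi].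
- intros hXY; apply Hxy, functional_extensionality; intros i.
  assert (hi := f_equal (fun v => v i) hXY); unfold shift in hi; simpl in hi; lra.
- rewrite shift_sub; exact HS.
- eapply fk_eq_of_gaps; [| exact Heq].
  intros j; exact (rescale_spec (kappa j) (Hsign e he j)).
Qed.
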